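(* Let $R$ be a ring and $(P,Q,\psi)$ an $R$-system. (a) The Toeplitz ring $\mathcal{T}_{(P,Q,\psi)}=\bigoplus_{i\in\mathbb{Z}}\mathcal{T}_i$ is semi-saturated. (b) If $(S,T,\sigma,B)$ is any graded covariant representation of $(P,Q,\psi)$, then $B=\bigoplus_{i\in\mathbb{Z}}B_i$ is semi-saturated.
   Context: For additive subsets $X,Y$ of a ring, $XY$ is the additive subgroup generated by products, and $X^n$ similarly. A $\mathbb{Z}$-graded ring $A=\bigoplus_iA_i$ is semi-saturated if $A_n=(A_1)^n$ and $A_{-n}=(A_{-1})^n$ for all $n>0$. An $R$-system is a triple $(P,Q,\psi)$ with $P,Q$ $R$-bimodules and $\psi:P\otimes_RQ\to R$ an $R$-bimodule homomorphism. Put $P^{\otimes0}=Q^{\otimes0}=R$, $Q^{\otimes n}=Q^{\otimes(n-1)}\otimes_RQ$, $P^{\otimes n}=P\otimes_RP^{\otimes(n-1)}$. A covariant representation of $(P,Q,\psi)$ is a tuple $(S,T,\sigma,B)$ with $B$ a ring, $S:P\to B$, $T:Q\to B$ additive maps, $\sigma:R\to B$ a ring homomorphism, with $S(pr)=S(p)\sigma(r)$, $S(rp)=\sigma(r)S(p)$, $T(qr)=T(q)\sigma(r)$, $T(rq)=\sigma(r)T(q)$, $\sigma(\psi(p\otimes q))=S(p)T(q)$; it is graded if $B$ is generated as a ring by $\sigma(R)\cup S(P)\cup T(Q)$ and $B$ carries a $\mathbb{Z}$-grading with $\sigma(R)\subseteq B_0$, $T(Q)\subseteq B_1$, $S(P)\subseteq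 B_{-1}$. The Toeplitz representation $(\iota_P,\iota_Q,\iota_R,\mathcal{T}_{(P,Q,\psi)})$ is the universal covariant representation (every graded covariant representation $(S,T,\sigma,B)$ receives a unique graded ring epimorphism $\eta$ with $\eta\iota_P=S$, $\eta\iota_Q=T$, $\eta\iota_R=\sigma$); its grading is $\mathcal{T}_i$ = additive group generated by elements $\iota_Q^m(q)\iota_P^n(p)$ and $\iota_R(r)\iota_Q^m(q)\iota_P^n(p)$ with $q\in Q^{\otimes m}$, $p\in P^{\otimes n}$, $m-n=i$, where $\iota_Q^m(q_1\otimes\cdots\otimes q_m)=\iota_Q(q_1)\cdots\iota_Q(q_m)$, similarly $\iota_P^n$, and $\iota^0=\iota_R$. *)

(* Rings here are NOT assumed unital (as in the paper's setting),
   so we define a minimal structure of (associative, not necessarily unital) rings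
   on top of MathComp's zmodType, bimodules over such rings, gradings, etc. *)
From HB Require Import structures.
From mathcomp Require Import all_boot all_order all_algebra.
Set Implicit Arguments. Unset Strict Implicit. Unset Printing Implicit Defensive.
Import Order.TTheory GRing.Theory Num.Theory.
Local Open Scope ring_scope.

Record nuRing := NuRing {
  nr_sort :> zmodType;
  nr_mul : nr_sort -> nr_sort -> nr_sort;
  nr_mulA : associative nr_mul;
  nr_mulDl : left_distributive nr_mul +%R;
  nr_mulDr : right_distributive nr_mul +%R }.

Record bimod (R : nuRing) := Bimod {
  bm_sort :> zmodType;
  lact : R -> bm_sort -> bm_sort;
  ract : bm_sort -> R -> bm_sort;
  lactDl : forall r s m, lact (r + s) m = lact r m + lact s m;
  lactDr : forall r m n, lact r (m + n) = lact r m + lact r n;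
  lactA : forall r s m, lact (nr_mul r s) m = lact r (lact s m);
  ractDl : forall m n r, ract (m + n) r = ract m r + ract n r;
  ractDr : forall m r s, ract m (r + s) = ract m r + ract m s;
  ractA : forall m r s, ract m (nr_mul r s) = ract (ract m r) s;
  lractA : forall r m s, lact r (ract m s) = ract (lact r m) s }.

(* An R-system (P, Q, psi): psi : P (x)_R Q -> R an R-bimodule homomorphism.
   By the universal property of the balanced tensor product, such a psi is the
   same as a biadditive R-balanced map P -> Q -> R which is left R-linear in
   the first and right R-linear in the second variable; psi p q stands for
   psi (p (x) q). *)
Definition Rsystem_map (R : nuRing) (P Q : bimod R) (psi : P -> Q -> R) : Prop :=
  [/\ (forall p p' q, psi (p + p') q = psi p q + psi p' q),
      (forall p q q', psi p (q + q') = psi p q + psi p q'),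
      (forall p r q, psi (ract p r) q = psi p (lact r q)),
      (forall r p q, psi (lact r p) q = nr_mul r (psi p q)) &
      (forall p q r, psi p (ract q r) = nr_mul (psi p q) r)].

Inductive addgen (B : zmodType) (Z : B -> Prop) : B -> Prop :=
  | ag_in x : Z x -> addgen Z x
  | ag_0 : addgen Z 0
  | ag_add x y : addgen Z x -> addgen Z y -> addgen Z (x + y)
  | ag_opp x : addgen Z x -> addgen Z (- x).

Definition prodset (B : nuRing) (X Y : B -> Prop) : B -> Prop :=
  addgen (fun z => exists x y, [/\ X x, Y y & z = nr_mul x y]).

(* setpow X n = X^n for n > 0 (X^1 = X, X^(n+1) = X^n X);
   the value at n = 0 is a dummy (X) and is never used. *)
Fixpoint setpow (B : nuRing) (X : B -> Prop) (n : nat) : B -> Prop :=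
  match n with
  | 0 | 1 => X
  | m.+1 => prodset (setpow X m) X
  end.

Inductive ringgen (B : nuRing) (X : B -> Prop) : B -> Prop :=
  | rg_in x : X x -> ringgen X x
  | rg_0 : ringgen X 0
  | rg_add x y : ringgen X x -> ringgen X y -> ringgen X (x + y)
  | rg_opp x : ringgen X x -> ringgen X (- x)
  | rg_mul x y : ringgen X x -> ringgen X y -> ringgen X (nr_mul x y).

Definition is_Zgrading (B : nuRing) (G : int -> B -> Prop) : Prop :=
  [/\ (forall i, G i 0 /\ (forall x y, G i x -> G i y -> G i (x - y))),
      (forall i j x y, G i x -> G j y -> G (i + j) (nr_mul x y)),
      (forall b : B, exists (N : nat) (f : int -> B),
          (forall i, G i (f i)) /\ b = \sum_(k < (N + N).+1) f (k%:Z - N%:Z)) &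
      (forall (N : nat) (f : int -> B), (forall i, G i (f i)) ->
          \sum_(k < (N + N).+1) f (k%:Z - N%:Z) = 0 ->
          forall k : 'I_(N + N).+1, f (k%:Z - N%:Z) = 0)].

Definition semi_saturated (B : nuRing) (G : int -> B -> Prop) : Prop :=
  forall n : nat, (0 < n)%N ->
    (forall b, G n%:Z b <-> setpow (G 1) n b) /\
    (forall b, G (- n%:Z) b <-> setpow (G (-1)) n b).

Definition ring_hom (R B : nuRing) (f : R -> B) : Prop :=
  (forall x y, f (x + y) = f x + f y) /\ (forall x y, f (nr_mul x y) = nr_mul (f x) (f y)).

Definition covariant_rep (R : nuRing) (P Q : bimod R) (psi : P -> Q -> R)
    (B : nuRing) (S : P -> B) (T : Q -> B) (sigma : R -> B) : Prop :=
  (forall p p', S (p + p') = S p + S p') /\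
  (forall q q', T (q + q') = T q + T q') /\
  ring_hom sigma /\
  (forall p r, S (ract p r) = nr_mul (S p) (sigma r)) /\
  (forall r p, S (lact r p) = nr_mul (sigma r) (S p)) /\
  (forall q r, T (ract q r) = nr_mul (T q) (sigma r)) /\
  (forall r q, T (lact r q) = nr_mul (sigma r) (T q)) /\
  (forall p q, sigma (psi p q) = nr_mul (S p) (T q)).

Definition graded_covariant_rep (R : nuRing) (P Q : bimod R) (psi : P -> Q -> R)
    (B : nuRing) (G : int -> B -> Prop) (S : P -> B) (T : Q -> B) (sigma : R -> B) : Prop :=
  covariant_rep psi S T sigma /\
  (forall b, ringgen (fun x => (exists r, x = sigma r) \/ (exists p, x = S p)
                               \/ (exists q, x = T q)) b) /\
  is_Zgrading G /\
  (forall r, G 0 (sigma r)) /\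
  (forall q, G 1 (T q)) /\
  (forall p, G (-1) (S p)).

Fixpoint wprod (B : nuRing) (X : Type) (f : X -> B) (x0 : X) (s : seq X) : B :=
  match s with
  | [::] => f x0
  | y :: s' => nr_mul (f x0) (wprod f y s')
  end.

(* mono f g m x : x = iota^m(e) for an elementary tensor e of X^{(x)m}, where
   iota^0 = g on X^{(x)0} = R, and iota^m(x1 (x) .. (x) xm) = f x1 ... f xm.
   Since iota^m is additive and X^{(x)m} is additively generated by elementary
   tensors, the additive group generated by the iota^m(q) iota^n(p) is the one
   generated by these values on elementary tensors. *)
Definition mono (R B : nuRing) (X : Type) (f : X -> B) (g : R -> B) (m : nat) (x : B) : Prop :=
  match m with
  | 0 => exists r, x = g r
  | k.+1 => exists x0 s, size s = k /\ x = wprod f x0 s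
  end.

Definition toeplitz_comp (R : nuRing) (P Q : bimod R) (Tor : nuRing)
    (iP : P -> Tor) (iQ : Q -> Tor) (iR : R -> Tor) (i : int) : Tor -> Prop :=
  addgen (fun z => exists (m n : nat) (a c : Tor),
     [/\ m%:Z - n%:Z = i, mono iQ iR m a, mono iP iR n c &
         (z = nr_mul a c \/ exists r, z = nr_mul (iR r) (nr_mul a c))]).

Definition is_toeplitz_rep (R : nuRing) (P Q : bimod R) (psi : P -> Q -> R)
    (Tor : nuRing) (iP : P -> Tor) (iQ : Q -> Tor) (iR : R -> Tor) : Prop :=
  graded_covariant_rep psi (toeplitz_comp iP iQ iR) iP iQ iR /\
  forall (B : nuRing) (G : int -> B -> Prop) (S : P -> B) (T : Q -> B) (sigma : R -> B),
    graded_covariant_rep psi G S T sigma ->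
    exists eta : Tor -> B,
      let good (e : Tor -> B) :=
        ring_hom e /\ (forall b, exists x, e x = b) /\
        (forall i x, toeplitz_comp iP iQ iR i x -> G i (e x)) /\
        (forall p, e (iP p) = S p) /\ (forall q, e (iQ q) = T q) /\
        (forall r, e (iR r) = sigma r) in
      good eta /\ forall eta', good eta' -> forall x, eta' x = eta x.

From HB Require Import structures.
From mathcomp Require Import all_boot all_algebra zify.
Set Implicit Arguments. Unset Strict Implicit. Unset Printing Implicit Defensive.
Import GRing.Theory.
Local Open Scope ring_scope.

(* Part (a) is the special case of part (b) given by the Toeplitz representation
   itself, and (b) holds for every Z-graded ring B generated as a ring by
   elements of degrees 0, 1 and -1.  Put K_0 = B_0, K_n = (B_1)^n and
   K_(-n) = (B_(-1))^n for n > 0.  Right multiplication by a generator of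
   degree d maps K_i into K_(i+d): e.g. (B_1)^(n+1) B_(-1) = (B_1)^n (B_1 B_(-1))
   lies in (B_1)^n B_0 = (B_1)^n.  Hence every element of B is a sum of elements
   of the K_i, and since K_i is contained in B_i and the sum of the B_i is
   direct, B_n = K_n. *)

Definition is_addsubgroup (B : zmodType) (W : B -> Prop) : Prop :=
  [/\ W 0, (forall x y, W x -> W y -> W (x + y)) & (forall x, W x -> W (- x))].

Lemma addgen_subgroup (B : zmodType) (X : B -> Prop) : is_addsubgroup (addgen X).
Proof. by split; [exact: ag_0 | exact: ag_add | exact: ag_opp]. Qed.

Lemma addgen_min (B : zmodType) (X W : B -> Prop) :
  is_addsubgroup W -> (forall x, X x -> W x) -> forall x, addgen X x -> W x.
Proof.
move=> [W0 WD WN] XW x.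
by elim=> [y /XW | | y z _ Wy _ Wz | y _ Wy]; [| | exact: WD | exact: WN].
Qed.

Lemma addgen_union_seq (B : zmodType) (I : eqType) (W : I -> B -> Prop) :
    (forall i, is_addsubgroup (W i)) ->
  forall x, addgen (fun z => exists i, W i z) x ->
  exists s : seq (I * B), (forall y, y \in s -> W y.1 y.2) /\ x = \sum_(y <- s) y.2.
Proof.
move=> W_subgroup x; elim=> [z [i Wz] | | a b _ [s1 [W1 ->]] _ [s2 [W2 ->]] | a _ [s [Ws ->]]].
- exists [:: (i, z)]; rewrite big_seq1; split=> // y.
  by rewrite inE => /eqP ->.
- by exists [::]; rewrite big_nil.
- exists (s1 ++ s2); rewrite big_cat; split=> // y.
  by rewrite mem_cat => /orP[/W1 | /W2].
- exists [seq (y.1, - y.2) | y <- s]; rewrite big_map sumrN; split=> // y.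
  by case/mapP=> z /Ws Wz ->; have [_ _ WN] := W_subgroup z.1; exact: WN.
Qed.

Lemma big_window_delta (B : zmodType) (N : nat) (i : int) (c : B) :
  (absz i <= N)%N ->
  \sum_(k < (N + N).+1) (if k%:Z - N%:Z == i then c else 0) = c.
Proof.
move=> iN; have iN_lt : (absz (i + N%:Z)%R < (N + N).+1)%N by lia.
rewrite (bigD1 (inord (absz (i + N%:Z)%R))) //= inordK //.
have -> : (absz (i + N%:Z)%R)%:Z - N%:Z == i by apply/eqP; lia.
rewrite big1 ?addr0 // => k /negP k_neq; case: eqP => // ki.
by case: k_neq; apply/eqP/val_inj; rewrite /= inordK //; lia.
Qed.

Lemma big_window_partition (B : zmodType) (N : nat) (s : seq (int * B)) :
    (forall y, y \in s -> (absz y.1 <= N)%N) ->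
  \sum_(k < (N + N).+1) \sum_(y <- s | y.1 == k%:Z - N%:Z) y.2 = \sum_(y <- s) y.2.
Proof.
move=> sN; under eq_bigr => k _ do rewrite big_mkcond /=.
rewrite exchange_big /=; apply: eq_big_seq => y /sN yN.
by rewrite -[RHS](big_window_delta y.2 yN); apply: eq_bigr => k _; rewrite eq_sym.
Qed.

Section NonUnitalRing.
Variable B : nuRing.

Lemma nr_mul0r (x : B) : nr_mul 0 x = 0.
Proof. by apply: (addrI (nr_mul 0 x)); rewrite addr0 -nr_mulDl addr0. Qed.

Lemma nr_mulr0 (x : B) : nr_mul x 0 = 0.
Proof. by apply: (addrI (nr_mul x 0)); rewrite addr0 -nr_mulDr addr0. Qed.

Lemma nr_mulNr (x y : B) : nr_mul (- x) y = - nr_mul x y.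
Proof. by apply/eqP; rewrite -addr_eq0 -nr_mulDl addNr nr_mul0r. Qed.

Lemma nr_mulrN (x y : B) : nr_mul x (- y) = - nr_mul x y.
Proof. by apply/eqP; rewrite -addr_eq0 -nr_mulDr addNr nr_mulr0. Qed.

Lemma is_addsubgroup_mulr_preim (W : B -> Prop) (g : B) :
  is_addsubgroup W -> is_addsubgroup (fun x => W (nr_mul x g)).
Proof.
move=> [W0 WD WN]; split; first by rewrite nr_mul0r.
  by move=> x y Wx Wy; rewrite nr_mulDl; exact: WD.
by move=> x Wx; rewrite nr_mulNr; exact: WN.
Qed.

Lemma prodset_mul (X Y : B -> Prop) (x y : B) : X x -> Y y -> prodset X Y (nr_mul x y).
Proof. by move=> Xx Yy; apply: ag_in; exists x, y. Qed.

End NonUnitalRing.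

Section GradedRing.
Variables (B : nuRing) (G : int -> B -> Prop).
Hypothesis G_subgroup : forall i, is_addsubgroup (G i).
Hypothesis G_mul : forall i j x y, G i x -> G j y -> G (i + j) (nr_mul x y).

Lemma G_mul_eq i j k x y : i + j = k -> G i x -> G j y -> G k (nr_mul x y).
Proof. by move=> <-; exact: G_mul. Qed.

Lemma setpow_subgroup m : is_addsubgroup (setpow (G 1) m.+1).
Proof. by case: m => [|m]; [exact: G_subgroup | exact: addgen_subgroup]. Qed.

Lemma setpow_sub m x : setpow (G 1) m.+1 x -> G m.+1 x.
Proof.
elim: m x => [// | m IH] x; apply: addgen_min => // _ [a [b [Ga Gb ->]]].
by apply: (G_mul_eq _ (IH _ Ga) Gb); lia.
Qed.

Lemma setpow_mul_deg0 m x g :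
  setpow (G 1) m.+1 x -> G 0 g -> setpow (G 1) m.+1 (nr_mul x g).
Proof.
case: m => [|m] Gx Gg; first by apply: (G_mul_eq _ Gx Gg); lia.
move: x Gx; apply: addgen_min; first exact/is_addsubgroup_mulr_preim/addgen_subgroup.
move=> _ [a [b [Ga Gb ->]]]; rewrite -nr_mulA; apply: prodset_mul => //.
by apply: (G_mul_eq _ Gb Gg); lia.
Qed.

Lemma setpow_mul_degN1 m x g :
  setpow (G 1) m.+2 x -> G (-1) g -> setpow (G 1) m.+1 (nr_mul x g).
Proof.
move=> Gx Gg; move: x Gx; apply: addgen_min.
  exact/is_addsubgroup_mulr_preim/setpow_subgroup.
move=> _ [a [b [Ga Gb ->]]]; rewrite -nr_mulA; apply: setpow_mul_deg0 => //.
by apply: (G_mul_eq _ Gb Gg); lia.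
Qed.

End GradedRing.

Definition opp_grading (B : nuRing) (G : int -> B -> Prop) : int -> B -> Prop :=
  fun i => G (- i).

(* The K_i of the proof idea; [Negz m] is the degree -(m+1). *)
Definition pow_comp (B : nuRing) (G : int -> B -> Prop) (i : int) : B -> Prop :=
  match i with
  | Posz 0 => G 0
  | Posz m.+1 => setpow (G 1) m.+1
  | Negz m => setpow (G (-1)) m.+1
  end.

Section PowerComponents.
Variables (B : nuRing) (G : int -> B -> Prop).
Hypothesis G_subgroup : forall i, is_addsubgroup (G i).
Hypothesis G_mul : forall i j x y, G i x -> G j y -> G (i + j) (nr_mul x y).

Let Gopp_subgroup i : is_addsubgroup (opp_grading G i).
Proof. exact: G_subgroup. Qed.

Let Gopp_mul i j x y :
  opp_grading G i x -> opp_grading G j y -> opp_grading G (i + j) (nr_mul x y).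
Proof. by rewrite /opp_grading opprD; exact: G_mul. Qed.

Let Gopp_N1 x : G 1 x -> opp_grading G (-1) x.
Proof. by rewrite /opp_grading opprK. Qed.

Let Gopp_0 x : G 0 x -> opp_grading G 0 x.
Proof. by rewrite /opp_grading oppr0. Qed.

Lemma pow_comp_sub i x : pow_comp G i x -> G i x.
Proof.
case: i => [[|m] // | m] /=; first exact: setpow_sub.
by move/(setpow_sub Gopp_subgroup Gopp_mul); rewrite /opp_grading NegzE.
Qed.

Lemma pow_comp_subgroup i : is_addsubgroup (pow_comp G i).
Proof.
case: i => [[|m] | m]; first exact: G_subgroup.
  exact: setpow_subgroup.
exact: (setpow_subgroup Gopp_subgroup).
Qed.

Lemma pow_comp_mul_deg0 i x g : pow_comp G i x -> G 0 g -> pow_comp G i (nr_mul x g).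
Proof.
case: i => [[|m] | m] /= Gx Gg.
- by apply: (G_mul_eq G_mul _ Gx Gg); lia.
- exact: setpow_mul_deg0.
- exact: (setpow_mul_deg0 Gopp_mul Gx (Gopp_0 Gg)).
Qed.

Lemma pow_comp_mul_deg1 i x g : pow_comp G i x -> G 1 g -> pow_comp G (i + 1) (nr_mul x g).
Proof.
case: i => [[|m] | [|m]] Gx Gg.
- by rewrite add0r /=; apply: (G_mul_eq G_mul _ Gx Gg); lia.
- have -> : Posz m.+1 + 1 = Posz m.+2 by lia.
  exact: prodset_mul.
- have -> : Negz 0 + 1 = 0 by lia.
  by apply: (G_mul_eq G_mul _ Gx Gg); lia.
- have -> : Negz m.+1 + 1 = Negz m by lia.
  exact: (setpow_mul_degN1 Gopp_subgroup Gopp_mul Gx (Gopp_N1 Gg)).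
Qed.

Lemma pow_comp_mul_degN1 i x g :
  pow_comp G i x -> G (-1) g -> pow_comp G (i - 1) (nr_mul x g).
Proof.
case: i => [[|[|m]] | m] Gx Gg.
- have -> : Posz 0 - 1 = Negz 0 by lia.
  by apply: (G_mul_eq G_mul _ Gx Gg); lia.
- have -> : Posz 1 - 1 = 0 by lia.
  by apply: (G_mul_eq G_mul _ Gx Gg); lia.
- have -> : Posz m.+2 - 1 = Posz m.+1 by lia.
  exact: setpow_mul_degN1.
- have -> : Negz m - 1 = Negz m.+1 by lia.
  exact: prodset_mul.
Qed.

Definition pow_span : B -> Prop := addgen (fun x => exists i, pow_comp G i x).

Lemma pow_span_mulr y : G 0 y \/ G 1 y \/ G (-1) y ->
  forall x, pow_span x -> pow_span (nr_mul x y).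
Proof.
move=> Gy; apply: addgen_min; first exact/is_addsubgroup_mulr_preim/addgen_subgroup.
move=> x [i Kx]; apply: ag_in.
case: Gy => [G0y | [G1y | GN1y]].
- by exists i; exact: pow_comp_mul_deg0.
- by exists (i + 1); exact: pow_comp_mul_deg1.
- by exists (i - 1); exact: pow_comp_mul_degN1.
Qed.

(* Induction on the subring generated by X, for the statement that y lies in
   the span and right multiplication by y preserves the span. *)
Lemma ringgen_pow_span (X : B -> Prop) :
    (forall x, X x -> G 0 x \/ G 1 x \/ G (-1) x) ->
  forall y, ringgen X y -> pow_span y.
Proof.
move=> X_deg y Xy.
suff : pow_span y /\ forall x, pow_span x -> pow_span (nr_mul x y) by case.
elim: Xy => [x /X_deg Gx | | a b _ [Sa aS] _ [Sb bS] | a _ [Sa aS] | a b _ [Sa aS] _ [_ bS]].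
- split; last exact: pow_span_mulr.
  by apply: ag_in; case: Gx => [G0x | [G1x | GN1x]]; [exists 0 | exists 1 | exists (-1)].
- by split=> [|x _]; rewrite ?nr_mulr0; exact: ag_0.
- split=> [|x Sx]; first exact: ag_add.
  by rewrite nr_mulDr; apply: ag_add; [exact: aS | exact: bS].
- split=> [|x Sx]; first exact: ag_opp.
  by rewrite nr_mulrN; apply/ag_opp/aS.
- by split=> [|x Sx]; [exact: bS | rewrite nr_mulA; exact/bS/aS].
Qed.

End PowerComponents.

Section DirectSum.
Variables (B : nuRing) (G : int -> B -> Prop).
Hypothesis G_subgroup : forall i, is_addsubgroup (G i).
Hypothesis G_direct : forall (N : nat) (f : int -> B), (forall i, G i (f i)) ->
  \sum_(k < (N + N).+1) f (k%:Z - N%:Z) = 0 ->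
  forall k : 'I_(N + N).+1, f (k%:Z - N%:Z) = 0.

(* If b in B_n is a sum of elements of W_i <= B_i, grouping the summands by
   degree into c_i, the homogeneous family c_i - [i = n] b sums to zero, so
   its degree-n term vanishes: b = c_n. *)
Lemma comp_of_homogeneous_sum (W : int -> B -> Prop) (s : seq (int * B)) n b :
    (forall i, is_addsubgroup (W i)) -> (forall i x, W i x -> G i x) ->
    (forall y, y \in s -> W y.1 y.2) ->
  G n b -> b = \sum_(y <- s) y.2 -> W n b.
Proof.
move=> W_subgroup WG sW Gb b_sum.
pose N := (absz n + \sum_(y <- s) absz y.1)%N.
have sN y : y \in s -> (absz y.1 <= N)%N.
  by move=> ys; rewrite /N (big_rem y) //= addnCA leq_addr.
have nN : (absz n <= N)%N by exact: leq_addr.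
pose c i := \sum_(y <- s | y.1 == i) y.2.
have Wc i : W i (c i).
  have [W0 WD _] := W_subgroup i; rewrite /c big_seq_cond.
  by apply: big_ind => // y /andP[/sW ? /eqP <-].
pose f i := c i - (if i == n then b else 0).
have Gf i : G i (f i).
  have [_ GD GN] := G_subgroup i; apply: GD; first exact: WG.
  by apply: GN; case: eqP => [-> // | _]; have [] := G_subgroup i.
have f_sum : \sum_(k < (N + N).+1) f (k%:Z - N%:Z) = 0.
  by rewrite sumrB big_window_delta // big_window_partition // b_sum subrr.
have nN_lt : (absz (n + N%:Z)%R < (N + N).+1)%N by lia.
have := G_direct Gf f_sum (inord (absz (n + N%:Z)%R)); rewrite inordK //.
have -> : (absz (n + N%:Z)%R)%:Z - N%:Z = n by lia.
by rewrite /f eqxx => /subr0_eq <-.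
Qed.

End DirectSum.

Lemma Zgrading_subgroup (B : nuRing) (G : int -> B -> Prop) :
  is_Zgrading G -> forall i, is_addsubgroup (G i).
Proof.
case=> G_subB _ _ _ i; have [G0 GB] := G_subB i.
have GN x : G i x -> G i (- x) by move=> Gx; rewrite -sub0r; exact: GB.
by split=> // x y Gx Gy; rewrite -[y]opprK; apply/GB/GN.
Qed.

Lemma semi_saturated_of_ringgen (B : nuRing) (G : int -> B -> Prop) (X : B -> Prop) :
    is_Zgrading G -> (forall b, ringgen X b) ->
    (forall x, X x -> G 0 x \/ G 1 x \/ G (-1) x) ->
  semi_saturated G.
Proof.
move=> GZ X_gen X_deg; have G_subgroup := Zgrading_subgroup GZ.
case: GZ => _ G_mul _ G_direct.
have pow_compE i b : G i b <-> pow_comp G i b.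
  split=> [Gb | ]; last exact: pow_comp_sub.
  have [s [sK b_sum]] := addgen_union_seq (pow_comp_subgroup G_subgroup)
    (ringgen_pow_span G_subgroup G_mul X_deg (X_gen b)).
  exact: (comp_of_homogeneous_sum G_subgroup G_direct (pow_comp_subgroup G_subgroup)
    (pow_comp_sub G_subgroup G_mul) sK Gb b_sum).
case=> [// | m] _; split=> b; first exact: pow_compE.
by rewrite pow_compE -NegzE.
Qed.

Theorem mainTheorem12 (R : nuRing) (P Q : bimod R) (psi : P -> Q -> R)
    (Hpsi : Rsystem_map psi) :
  (* (a) the Toeplitz ring is semi-saturated *)
  (forall (Tor : nuRing) (iP : P -> Tor) (iQ : Q -> Tor) (iR : R -> Tor),
      is_toeplitz_rep psi iP iQ iR ->
      semi_saturated (toeplitz_comp iP iQ iR)) /\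
  (* (b) any graded covariant representation gives a semi-saturated ring *)
  (forall (B : nuRing) (G : int -> B -> Prop) (S : P -> B) (T : Q -> B) (sigma : R -> B),
      graded_covariant_rep psi G S T sigma -> semi_saturated G).
Proof.
have graded_rep_sat (B : nuRing) G (S : P -> B) (T : Q -> B) (sigma : R -> B) :
    graded_covariant_rep psi G S T sigma -> semi_saturated G.
  move=> [_ [gen [GZ [G_sigma [G_T G_S]]]]]; apply: (semi_saturated_of_ringgen GZ gen).
  by move=> _ [[r ->] | [[p ->] | [q ->]]]; [left | right; right | right; left].
split=> [Tor iP iQ iR [rep _] | ]; [exact: graded_rep_sat rep | exact: graded_rep_sat].
Qed.
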